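(* For $n,k\geq0$ let $s_{n,k}=\sum_{j=0}^{n-k}\binom{k+j}{k}\binom{j}{n-j-k}$ (equivalently $s_{n,k}=[x^n]\,x^k(1-x-x^2)^{-(k+1)}$). Then $s_{n,k}$ equals the number of free symmetric Schröder paths of length $2n$ whose left half (the part from $x=0$ to $x=n$) contains exactly $k$ up steps.
   Context: Steps: $U=(1,1)$ (up), $D=(1,-1)$ (down), $H=(2,0)$. A free symmetric Schröder path of length $2n$ is a lattice path from $(0,0)$ to $(2n,0)$ with steps $U,D,H$ (with no restriction on going below the $x$-axis) that has a vertex with $x$-coordinate $n$ and is invariant under reflection in the line $x=n$ (reversing the step sequence and interchanging $U$ and $D$, keeping $H$, gives the same sequence). Binomial coefficients $\binom{a}{b}$ with $b<0$ or $b>a$ are $0$. *)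

From HB Require Import structures.
From mathcomp Require Import all_boot.
Set Implicit Arguments. Unset Strict Implicit. Unset Printing Implicit Defensive.

(* Steps: U = (1,1), D = (1,-1), H = (2,0). *)
Inductive step := U | D | H.

Definition step_eqb (a b : step) : bool :=
  match a, b with U, U | D, D | H, H => true | _, _ => false end.
Lemma step_eqP : Equality.axiom step_eqb.
Proof. by case; case; constructor. Qed.
HB.instance Definition _ := hasDecEq.Build step step_eqP.

Definition swidth (x : step) : nat := if x is H then 2 else 1.
Definition width (s : seq step) : nat := sumn (map swidth s).

Definition sflip (x : step) : step :=
  match x with U => D | D => U | H => H end.
(* reflection of a path in the line x = n: reverse and swap U/D *)
Definition mirror (s : seq step) : seq step := rev (map sflip s).

(* free symmetric Schröder path of length 2n: from (0,0) to (2n,0),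
   with a vertex of abscissa n, invariant under the reflection *)
Definition free_sym_schroder (n : nat) (s : seq step) : bool :=
  [&& width s == 2 * n,
      count (pred1 U) s == count (pred1 D) s,
      has (fun i => width (take i s) == n) (iota 0 (size s).+1)
    & mirror s == s].

(* the left half (prefix ending at the vertex of abscissa n; it is unique
   since widths of prefixes are strictly increasing) has exactly k up steps *)
Definition left_half_ups (n k : nat) (s : seq step) : bool :=
  has (fun i => (width (take i s) == n) && (count (pred1 U) (take i s) == k))
      (iota 0 (size s).+1).

Fixpoint seqs_of_size (m : nat) : seq (seq step) :=
  if m is m'.+1 then
    flatten [seq [seq x :: t | t <- seqs_of_size m'] | x <- [:: U; D; H]]
  else [:: [::]].

(* all step sequences with at most m steps, each exactly once
   (a path of width 2n has at most 2n steps) *)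
Definition seqs_upto (m : nat) : seq (seq step) :=
  flatten [seq seqs_of_size i | i <- iota 0 m.+1].

Definition num_fssp (n k : nat) : nat :=
  count (fun s => free_sym_schroder n s && left_half_ups n k s) (seqs_upto (2 * n)).

Definition snk (n k : nat) : nat :=
  if k <= n then \sum_(0 <= j < (n - k).+1) 'C(k + j, k) * 'C(j, n - j - k)
  else 0.

From mathcomp Require Import all_boot zify.

(* A free symmetric Schröder path is determined by its left half [s], an
   arbitrary word of width n, as [s ++ mirror s]; so s_{n,k} has to count the
   words of width n with k up steps.  A word with m steps, k of them U, has
   width n exactly when it has n - m steps H; choosing the positions of the U
   steps and then those of the H steps among the rest gives
   C(m, k) * C(m - k, n - m) such words, and m = k + j turns the sum over m
   into the defining sum of s_{n,k}. *)

Lemma seqs_of_sizeS m :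
  seqs_of_size m.+1 = [seq x :: t | x <- [:: U; D; H], t <- seqs_of_size m].
Proof. by []. Qed.

Lemma mem_seqs_of_size m s : (s \in seqs_of_size m) = (size s == m).
Proof.
elim: m s => [|m IHm] [|x s] //; rewrite seqs_of_sizeS.
  by apply/allpairsP => -[[y t] [_ _]].
apply/allpairsP/idP => [[[y t] /= [_ + [_ ->]]]|]; first by rewrite IHm.
by rewrite eqSS -IHm => st; exists (x, s); case: x.
Qed.

Lemma uniq_seqs_of_size m : uniq (seqs_of_size m).
Proof.
elim: m => [|m IHm] //; rewrite seqs_of_sizeS allpairs_uniq //.
by move=> [x s] [y t] _ _ /= [-> ->].
Qed.

Lemma seqs_uptoS m : seqs_upto m.+1 = seqs_upto m ++ seqs_of_size m.+1.
Proof. by rewrite /seqs_upto -addn1 iotaD map_cat flatten_cat /= cats0. Qed.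

Lemma mem_seqs_upto m s : (s \in seqs_upto m) = (size s <= m).
Proof.
elim: m => [|m IHm]; first by case: s.
by rewrite seqs_uptoS mem_cat IHm mem_seqs_of_size [in RHS]leq_eqVlt ltnS orbC.
Qed.

Lemma uniq_seqs_upto m : uniq (seqs_upto m).
Proof.
elim: m => [|m IHm] //; rewrite seqs_uptoS cat_uniq IHm uniq_seqs_of_size andbT.
apply/hasPn => s; rewrite mem_seqs_of_size mem_seqs_upto.
by move=> /eqP ->; rewrite ltnn.
Qed.

Lemma width_cons x s : width (x :: s) = swidth x + width s.
Proof. by []. Qed.

Lemma width_cat s t : width (s ++ t) = width s + width t.
Proof. by rewrite /width map_cat sumn_cat. Qed.

Lemma width_eq0 s : (width s == 0) = (s == [::]).
Proof. by case: s => // -[]. Qed.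

Lemma width_size_countH s : width s = size s + count (pred1 H) s.
Proof. by elim: s => // -[] s IHs; rewrite width_cons IHs /=; lia. Qed.

Lemma size_le_width s : size s <= width s.
Proof. by rewrite width_size_countH leq_addr. Qed.

Lemma sflipK : involutive sflip. Proof. by case. Qed.

Lemma mirrorK : involutive mirror.
Proof. by move=> s; rewrite /mirror map_rev revK (mapK sflipK). Qed.

Lemma mirror_cat s t : mirror (s ++ t) = mirror t ++ mirror s.
Proof. by rewrite /mirror map_cat rev_cat. Qed.

Lemma width_mirror s : width (mirror s) = width s.
Proof.
rewrite /width /mirror map_rev sumn_rev -map_comp.
by congr sumn; apply: eq_map; case.
Qed.

Lemma count_mirror (x : step) s :
  count (pred1 x) (mirror s) = count (pred1 (sflip x)) s.
Proof. by rewrite /mirror count_rev count_map; apply: eq_count; case: x; case. Qed.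

Lemma eq_width_prefix s1 s2 t1 t2 :
  width s1 = width s2 -> s1 ++ t1 = s2 ++ t2 -> s1 = s2.
Proof.
elim: s1 s2 => [|x s1 IHs1] [|y s2] //=.
- by move/esym/eqP; rewrite width_eq0.
- by move/eqP; rewrite width_eq0.
rewrite !width_cons => w_eq [yx]; subst y => /IHs1 -> //; exact: addnI w_eq.
Qed.

Definition symmetrize (s : seq step) : seq step := s ++ mirror s.

Definition left_half (n k : nat) (s : seq step) : bool :=
  (width s == n) && (count (pred1 U) s == k).

Lemma eq_symmetrize s t :
  width s = width t -> symmetrize s = symmetrize t -> s = t.
Proof. exact: eq_width_prefix. Qed.

Lemma fssp_symmetrize n k s : left_half n k s ->
  free_sym_schroder n (symmetrize s) && left_half_ups n k (symmetrize s).
Proof.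
case/andP=> /eqP ws /eqP cs.
have mid : size s \in iota 0 (size (symmetrize s)).+1.
  by rewrite mem_iota size_cat ltnS leq_addr.
have take_mid : take (size s) (symmetrize s) = s by rewrite take_size_cat.
apply/andP; split; [apply/and4P; split|].
- by rewrite width_cat width_mirror ws addnn mul2n.
- by rewrite !count_cat !count_mirror addnC.
- by apply/hasP; exists (size s); rewrite // take_mid ws.
- by rewrite /symmetrize mirror_cat mirrorK.
- by apply/hasP; exists (size s); rewrite // take_mid ws cs !eqxx.
Qed.

Lemma fssp_left_half n k p :
  free_sym_schroder n p && left_half_ups n k p ->
  exists2 s, left_half n k s & p = symmetrize s.
Proof.
case/andP=> /and4P[/eqP wp _ _ /eqP mp] /hasP[i _ /andP[/eqP wl /eqP cl]].
exists (take i p); first by rewrite /left_half wl cl !eqxx.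
have split_p := cat_take_drop i p.
have w_drop : width (drop i p) = width (take i p).
  by have := width_cat (take i p) (drop i p); rewrite split_p; lia.
have : mirror (drop i p) ++ mirror (take i p) = take i p ++ drop i p.
  by rewrite -mirror_cat split_p mp.
move/eq_width_prefix; rewrite width_mirror => /(_ w_drop) drop_eq.
by rewrite -[LHS]split_p /symmetrize -drop_eq mirrorK.
Qed.

Definition has_letter_counts (k h : nat) (s : seq step) : bool :=
  (count (pred1 U) s == k) && (count (pred1 H) s == h).

Lemma count_letter_counts_rec m k h :
  count (has_letter_counts k h) (seqs_of_size m.+1) =
    (if k is k'.+1 then count (has_letter_counts k' h) (seqs_of_size m) else 0)
    + count (has_letter_counts k h) (seqs_of_size m)
    + (if h is h'.+1 then count (has_letter_counts k h') (seqs_of_size m) else 0).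
Proof.
rewrite /= cats0 !count_cat !count_map addnA /has_letter_counts.
congr (_ + _ + _).
- case: k => [|k]; first by rewrite (@eq_count _ _ pred0) ?count_pred0.
  by apply: eq_count => s /=; rewrite add1n eqSS.
- case: h => [|h].
    by rewrite (@eq_count _ _ pred0) ?count_pred0 // => s /=; rewrite andbF.
  by apply: eq_count => s /=; rewrite add1n eqSS.
Qed.

Lemma count_letter_counts m k h :
  count (has_letter_counts k h) (seqs_of_size m) = 'C(m, k) * 'C(m - k, h).
Proof.
elim: m k h => [|m IHm] [|k] [|h]; rewrite ?count_letter_counts_rec ?IHm //.
- by rewrite !bin0.
- by rewrite !subn0 !bin0 !mul1n binS addnC.
- by rewrite !bin0 !muln1 addn0 binS addnC.
rewrite subSS binS mulnDl [RHS]addnC -addnA -mulnDr; congr (_ + _).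
have [m_le_k | k_lt_m] := leqP m k; first by rewrite bin_small ?ltnS.
by rewrite -binS subnSK.
Qed.

Lemma num_fssp_left_halves n k :
  num_fssp n k = count (left_half n k) (seqs_upto n).
Proof.
rewrite /num_fssp -!size_filter -(size_map symmetrize (filter (left_half n k) _)).
apply/perm_size/uniq_perm; first exact: filter_uniq (uniq_seqs_upto _).
  rewrite map_inj_in_uniq; first exact: filter_uniq (uniq_seqs_upto _).
  move=> s t; rewrite !mem_filter => /andP[/andP[ws _] _] /andP[/andP[wt _] _].
  by apply: eq_symmetrize; rewrite (eqP ws) (eqP wt).
move=> p; rewrite mem_filter mem_seqs_upto.
apply/andP/mapP => [[/fssp_left_half[s hs ->] _]|].
  exists s => //; rewrite mem_filter hs mem_seqs_upto.
  by case/andP: hs => /eqP <- _; apply: size_le_width.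
move=> [s]; rewrite mem_filter => /andP[hs _] ->.
split; first exact: fssp_symmetrize.
case/andP: hs => /eqP ws _; apply: leq_trans (size_le_width _) _.
by rewrite width_cat width_mirror ws addnn mul2n.
Qed.

Lemma count_left_halves n k :
  count (left_half n k) (seqs_upto n) =
    \sum_(0 <= m < n.+1) 'C(m, k) * 'C(m - k, n - m).
Proof.
rewrite /seqs_upto count_flatten sumnE !big_map /index_iota subn0.
apply: eq_big_seq => m; rewrite mem_iota ltnS => /andP[_ m_le_n].
rewrite -count_letter_counts; apply: eq_in_count => s.
rewrite mem_seqs_of_size /left_half /has_letter_counts width_size_countH andbC.
by move=> /eqP ->; rewrite -[count_mem H s == _](eqn_add2l m) subnKC.
Qed.

Lemma snk_sum n k : snk n k = \sum_(0 <= m < n.+1) 'C(m, k) * 'C(m - k, n - m).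
Proof.
rewrite /snk; case: leqP => [k_le_n | n_lt_k]; last first.
  rewrite big_nat_cond; apply/esym/big1 => m /andP[/andP[_ m_lt_n1] _].
  by rewrite bin_small // (leq_trans m_lt_n1 n_lt_k).
rewrite [RHS](@big_cat_nat _ _ _ k) ?leqW //.
rewrite [X in _ = X + _]big_nat_cond [X in _ = X + _]big1 ?add0n; last first.
  by move=> m /andP[/andP[_ m_lt_k] _]; rewrite bin_small.
rewrite -[in RHS](add0n k) big_addn subSn //.
by apply: eq_bigr => j _; rewrite addnC addnK subnDA.
Qed.

Theorem theorem4p6 (n k : nat) : snk n k = num_fssp n k.
Proof. by rewrite snk_sum num_fssp_left_halves count_left_halves. Qed.
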